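(* Let $k$ be an algebraically closed field of characteristic $p>0$. Let $H$ be a finite group whose order is divisible by $p$ and which is generated by its elements of order prime to $p$. Let $r\neq p$ be a prime and let $A$ be a finite irreducible $\mathbb{F}_rH$-module (an elementary abelian $r$-group with $H$-action) such that $H$ has a regular orbit on $\mathrm{Hom}(A,k^* )$. Let $G = A\rtimes H$. Let $W$ be a $1$-dimensional $kA$-module affording a character $\lambda\in\mathrm{Hom}(A,k^* )$ lying in a regular $H$-orbit, and let $V = \mathrm{Ind}_A^G(W)$. Then $(G,V)$ is not weakly adequate.
   Context: For a representation $\rho:G\to\mathrm{GL}(V)$, $(G,V)$ is weakly adequate if $\mathrm{End}_k(V)$ is spanned by $\{\rho(g): g\in G,\ \rho(g)\text{ semisimple}\}$. A regular orbit is one on which $H$ acts with trivial stabilizers. *)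

From HB Require Import structures.
From mathcomp Require Import all_boot all_order all_fingroup all_solvable all_algebra.
Set Implicit Arguments. Unset Strict Implicit. Unset Printing Implicit Defensive.
Import GRing.Theory.
Local Open Scope ring_scope.

Definition is_char_hom (k : fieldType) (gT : finGroupType) (A : {set gT})
    (lam : gT -> k) : Prop :=
  {in A &, {morph lam : x y / (x * y)%g >-> x * y}} /\ {in A, forall a, lam a != 0}.

(* lam lies in a regular H-orbit for the action (h.lam)(a) = lam(a^h):
   its stabilizer in H is trivial. *)
Definition regular_char (k : fieldType) (gT : finGroupType) (A H : {set gT})
    (lam : gT -> k) : Prop :=
  forall h, h \in H -> {in A, forall a, lam (a ^ h)%g = lam a} -> h = 1%g.

(* Matrix of g in Ind_A^G(W), W affording lam, with respect to the basis
   indexed by the transversal H of A in G (G = A ><| H):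
   rho(g)_{s,t} = lam(s^-1 g t) if s^-1 g t \in A, and 0 otherwise. *)
Definition ind_mx (k : fieldType) (gT : finGroupType) (A H : {set gT})
    (lam : gT -> k) (g : gT) : 'M[k]_#|H| :=
  \matrix_(i, j)
    let x := ((enum_val i)^-1 * g * enum_val j)%g in
    if x \in A then lam x else 0.

(* (G, rho) is weakly adequate: End_k(V) is spanned by the rho(g), g in G,
   with rho(g) semisimple (= diagonalizable, k algebraically closed). *)
Definition weakly_adequate (k : fieldType) (gT : finGroupType) (G : {set gT})
    (n : nat) (rho : gT -> 'M[k]_n) : Prop :=
  forall M : 'M[k]_n, exists c : gT -> k,
    (forall g, g \in G -> c g != 0 -> diagonalizable (rho g)) /\
    M = \sum_(g in G) c g *: rho g.

From HB Require Import structures.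
From mathcomp Require Import all_boot all_order all_fingroup all_solvable all_algebra.
Set Implicit Arguments. Unset Strict Implicit. Unset Printing Implicit Defensive.
Import GRing.Theory.
Local Open Scope ring_scope.

(* Take h in H of order p.  If the elementary matrix E_(h,1) were a combination
   of semisimple rho(g), some semisimple rho(g) would have a nonzero (h,1)
   entry, forcing g = h a with a in A.  But (h a)^(p r) = 1 while (h a)^r is
   not in A, and a semisimple matrix M with M^(p r) = 1 in characteristic p
   already satisfies M^r = 1, since Frobenius is injective on its eigenvalues. *)

Lemma expr_pchar_eq1 (R : idomainType) p (x : R) m :
  p \in [pchar R] -> x ^+ (p * m) = 1 -> x ^+ m = 1.
Proof.
move=> pchar_p xpm1; apply/eqP; rewrite -subr_eq0.
rewrite -[_ == 0]andTb -(prime_gt0 (pcharf_prime pchar_p)) -expf_eq0.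
rewrite -pFrobenius_autE pFrobenius_autB_comm; last exact: commr1.
by rewrite pFrobenius_aut1 pFrobenius_autE -exprM mulnC xpm1 subrr.
Qed.

Lemma conjumxX (F : fieldType) n (V f : 'M[F]_n) m :
  V \in unitmx -> conjmx V (f ^+ m) = conjmx V f ^+ m.
Proof.
move=> V_unit; elim: m => [|m IHm].
  by rewrite !expr0 -idmxE conjmx_scalar ?row_free_unit.
by rewrite !exprS -!mulmxE conjmxM ?IHm // inE stablemx_unit.
Qed.

Lemma diag_mxX (R : pzSemiRingType) n (d : 'rV[R]_n) m :
  diag_mx d ^+ m = diag_mx (map_mx (fun x => x ^+ m) d).
Proof.
elim: m => [|m IHm].
  by apply/matrixP => i j; rewrite !mxE.
rewrite exprS IHm -mulmxE mulmx_diag; congr diag_mx.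
by apply/matrixP => i j; rewrite !ord1 !mxE exprS.
Qed.

Lemma diagonalizable_pchar_expr_eq1 (F : fieldType) n (M : 'M[F]_n) p m :
  p \in [pchar F] -> diagonalizable M -> M ^+ (p * m) = 1 -> M ^+ m = 1.
Proof.
move=> pchar_p [P P_unit /(similar_diagLR P_unit) [d ->]].
have conjmx1 (V : 'M[F]_n) : V \in unitmx -> conjmx V 1 = 1.
  by move=> V_unit; rewrite -idmxE conjmx_scalar ?row_free_unit.
rewrite -!conjumxX ?unitmx_inv // => /(congr1 (conjmx P)).
rewrite conjmxVK // conjmx1 // !diag_mxX => dpm1.
suff -> : diag_mx (map_mx (fun x => x ^+ m) d) = 1 by rewrite conjmx1 ?unitmx_inv.
apply/matrixP => i j; have /matrixP/(_ i j) := dpm1; rewrite !mxE.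
case: (eqVneq i j) => [->|_]; last by rewrite !mulr0n.
by rewrite !mulr1n => /(expr_pchar_eq1 pchar_p).
Qed.

Lemma weakly_adequate_entry (k : fieldType) (gT : finGroupType) (G : {set gT})
    n (rho : gT -> 'M[k]_n) i j :
  weakly_adequate G rho -> exists g, [/\ g \in G, diagonalizable (rho g) & rho g i j != 0].
Proof.
move=> /(_ (delta_mx i j)) [c [c_diag /matrixP/(_ i j)]].
rewrite summxE mxE !eqxx /=.
have [/exists_inP [g Gg]|/exists_inPn no_g] := boolP [exists g in G, c g * rho g i j != 0].
  rewrite mulf_eq0 negb_or => /andP [cg_neq0 rho_neq0].
  by exists g; split => //; apply: c_diag.
rewrite big1 => [/eqP|g Gg]; first by rewrite oner_eq0.
by rewrite mxE; apply/eqP/negPn/no_g.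
Qed.

Lemma mem_expMg_norm (gT : finGroupType) (A : {group gT}) h a m :
  (h \in 'N(A))%g -> a \in A -> ((h * a) ^+ m \in A)%g = (h ^+ m \in A)%g.
Proof.
move=> nAh Aa; have nAha : (h * a \in 'N(A))%g by rewrite groupM // (subsetP (normG A)).
have eq_coset : coset A ((h * a) ^+ m)%g = coset A (h ^+ m)%g.
  by rewrite !morphX //; congr (_ ^+ _)%g; apply: coset_kerr.
apply/idP/idP => Ax; apply: coset_idr; rewrite ?groupX //.
  by rewrite -eq_coset coset_id.
by rewrite eq_coset coset_id.
Qed.

Lemma char_hom1 (k : fieldType) (gT : finGroupType) (A : {group gT}) (lam : gT -> k) :
  is_char_hom A lam -> lam 1%g = 1.
Proof.
move=> [lamM lam_neq0]; apply: (mulfI (lam_neq0 _ (group1 A))).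
by rewrite mulr1 -lamM ?mulg1.
Qed.

Section InducedMatrix.

Variables (k : fieldType) (gT : finGroupType) (G A H : {group gT}) (lam : gT -> k).
Hypothesis defG : (A ><| H)%g = G.

Local Notation rho := (ind_mx A H lam).
Local Notation idx s := (enum_rank_in (group1 H) s).

Lemma sdprod_transversal_uniq g t u :
  t \in H -> u \in H -> (g * t \in A)%g -> (g * u \in A)%g -> t = u.
Proof.
move=> Ht Hu Agt Agu; have [_ _ _ _ trivAH] := sdprod_context defG.
have Atu : (t^-1 * u \in A)%g.
  have -> : (t^-1 * u = (g * t)^-1 * (g * u))%g by rewrite invMg -mulgA mulKg.
  by rewrite groupM ?groupV.
have : (t^-1 * u \in A :&: H)%g by rewrite inE Atu groupM ?groupV.
by rewrite trivAH inE -eq_mulVg1 => /eqP.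
Qed.

Lemma sdprod_transversal_exists g :
  g \in G -> exists2 t, t \in H & (g * t \in A)%g.
Proof.
move=> Gg; have [_ _ defAH _ _] := sdprod_context defG.
move: Gg; rewrite -defAH => /mulsgP [a h Aa Hh ->].
by exists h^-1%g; rewrite ?groupV // mulgK.
Qed.

Lemma ind_mxE g s t : s \in H -> t \in H ->
  rho g (idx s) (idx t) =
    if (s^-1 * g * t \in A)%g then lam (s^-1 * g * t)%g else 0.
Proof. by move=> Hs Ht; rewrite mxE !enum_rankK_in. Qed.

Lemma ind_mx_eq1 g : rho g = 1 -> g \in A.
Proof.
move/matrixP/(_ (idx 1%g) (idx 1%g)); rewrite ind_mxE // invg1 mul1g mulg1 mxE eqxx.
by case: ifP => // _ /eqP; rewrite eq_sym oner_eq0.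
Qed.

Hypothesis lam_hom : is_char_hom A lam.

Lemma ind_mx1 : rho 1%g = 1.
Proof.
apply/matrixP => i j; rewrite !mxE /= mulg1.
case: (eqVneq i j) => [->|ne_ij]; first by rewrite mulVg group1 (char_hom1 lam_hom).
case: ifP => //= Aij; case/eqP: ne_ij; apply: enum_val_inj.
by apply: (sdprod_transversal_uniq (g := (enum_val i)^-1)); rewrite ?enum_valP ?mulVg.
Qed.

Lemma ind_mxM : {in G &, {morph rho : x y / (x * y)%g >-> x *m y}}.
Proof.
move=> x y Gx Gy; apply/matrixP => i j; rewrite !mxE.
have Hs : enum_val i \in H := enum_valP i.
have [t Ht Axt] : exists2 t, t \in H & ((enum_val i)^-1 * x * t \in A)%g.
  apply: sdprod_transversal_exists; rewrite groupM ?groupV //.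
  by have [_ sHG _ _ _] := sdprod_context defG; apply: (subsetP sHG).
rewrite (bigD1 (idx t)) //= big1 ?addr0 => [|u ne_ut]; rewrite !mxE ?enum_rankK_in //=.
  have -> : ((enum_val i)^-1 * (x * y) * enum_val j
             = ((enum_val i)^-1 * x * t) * (t^-1 * y * enum_val j))%g.
    by rewrite !mulgA mulgK.
  rewrite Axt (groupMl _ Axt); case: ifP => Ay; last by rewrite mulr0.
  by case: lam_hom => lamM _; rewrite lamM.
case: ifP => [Axu|]; last by rewrite mul0r.
case/eqP: ne_ut; apply: enum_val_inj; rewrite enum_rankK_in //.
exact: (sdprod_transversal_uniq (enum_valP u) Ht Axu).
Qed.

Lemma ind_mxX x m : x \in G -> rho (x ^+ m)%g = rho x ^+ m.
Proof.
move=> Gx; elim: m => [|m IHm]; first by rewrite ind_mx1.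
by rewrite expgS exprS -IHm -mulmxE ind_mxM ?groupX.
Qed.

Lemma ind_mx_not_diagonalizable p r h a :
  p \in [pchar k] -> (exponent A %| r)%N -> ~~ (p %| r)%N ->
  h \in H -> #[h]%g = p -> a \in A -> ~ diagonalizable (rho (h * a)%g).
Proof.
move=> pchar_p expA_r p_ndvd_r Hh oh Aa diag_ha.
have [nsAG sHG _ nAH trivAH] := sdprod_context defG.
have nAh := subsetP nAH h Hh.
have Gha : (h * a \in G)%g.
  by apply: groupM; [apply: (subsetP sHG) | apply: (subsetP (normal_sub nsAG))].
have Aha_p : ((h * a) ^+ p \in A)%g by rewrite mem_expMg_norm // -oh expg_order group1.
have ha_pr : ((h * a) ^+ (p * r) = 1)%g.
  by rewrite expgM; apply/eqP; rewrite -order_dvdn (dvdn_trans _ expA_r) ?dvdn_exponent.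
have : rho (h * a)%g ^+ r = 1.
  apply: (diagonalizable_pchar_expr_eq1 pchar_p diag_ha).
  by rewrite -ind_mxX // ha_pr ind_mx1.
rewrite -ind_mxX // => /ind_mx_eq1; rewrite mem_expMg_norm // => Ahr.
have : (h ^+ r \in A :&: H)%g by rewrite inE Ahr groupX.
by rewrite trivAH inE -order_dvdn oh (negbTE p_ndvd_r).
Qed.

End InducedMatrix.

Theorem theorem5p2 (k : closedFieldType) (p : nat) (gT : finGroupType)
    (G A H : {group gT}) (r : nat) (lam : gT -> k) :
  p \in [pchar k] ->
  (p %| #|H|)%N ->
  <<[set x in H | p^'.-elt x]>>%g = H ->
  prime r -> r != p ->
  (r.-abelem A)%g ->
  (A ><| H)%g = G ->
  acts_irreducibly H A 'J ->
  (exists mu : gT -> k, is_char_hom A mu /\ regular_char A H mu) ->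
  is_char_hom A lam ->
  regular_char A H lam ->
  ~ weakly_adequate G (ind_mx A H lam).
Proof.
move=> pchar_p p_dvd_H _ prime_r r_neq_p abelA defG _ _ lam_hom _ adequate.
have prime_p := pcharf_prime pchar_p.
have [h Hh oh] := Cauchy prime_p p_dvd_H.
have [g [_ diag_g]] := weakly_adequate_entry
  (enum_rank_in (group1 H) h) (enum_rank_in (group1 H) 1%g) adequate.
rewrite ind_mxE // mulg1; case: ifP => [Ag _|]; last by rewrite eqxx.
have expA_r : (exponent A %| r)%N by move: abelA; rewrite abelemE // => /andP [].
have p_ndvd_r : ~~ (p %| r)%N by rewrite dvdn_prime2 // eq_sym.
apply: (ind_mx_not_diagonalizable defG lam_hom pchar_p expA_r p_ndvd_r Hh oh Ag).
by rewrite mulKVg.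
Qed.
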